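(* Let $\mathcal{P}=(|K|,V)$ be a polyhedral model. For all $x\in|K|$ and every SLCS$_\eta$ formula $\Phi$: $\mathcal{P},x\models\Phi$ if and only if $\mathbb{F}(\mathcal{P}),\mathbb{F}(x)\models\Phi$.
   Context: Fix a set PL of proposition letters. A simplex $\sigma\subseteq\mathbb{R}^m$ is the convex hull of $d+1$ affinely independent points $v_0,\dots,v_d$; its faces are the simplices spanned by nonempty subsets of its vertices. Its relative interior (cell) is $\tilde\sigma=\{\sum_i\lambda_iv_i:\lambda_i\in(0,1],\sum_i\lambda_i=1\}$. A simplicial complex $K$ is a finite set of simplices in $\mathbb{R}^m$ closed under faces, any two of which intersect in a common face or in $\emptyset$. Its set of cells $\tilde K=\{\tilde\sigma:\sigma\in K\}$ is partially ordered by $\tilde\sigma_1\preceq\tilde\sigma_2$ iff $\tilde\sigma_1$ is contained in the topological closure of $\tilde\sigma_2$ (equivalently, $\sigma_1$ is a face of $\sigma_2$). The polyhedron $|K|$ is the union of the simplices of $K$ with the subspace topology; its cells partition $|K|$. A polyhedral model is $\mathcal{P}=(|K|,V)$ with $V:\mathrm{PL}\to\mathcal{P}(|K|)$ such that each $V(p)$ is a union of cells. Its cell poset model is $\mathbb{F}(\mathcal{P})=(\tilde K,\preceq,\mathcal{V})$ with $\tilde\sigma\in\mathcal{V}(p)$ iff $\tilde\sigma\subseteq V(p)$; for $x\in|K|$, $\mathbb{F}(x)$ is the unique cell containing $x$. A topological path from $x$ is a continuous $\pi:[0,1]\to|K|$ with $\pi(0)=x$. In a poset $(W,\preceq)$ a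 $\pm$-path of length $\ell\ge2$ from $w$ is $\pi:\{0,\dots,\ell\}\to W$ with $\pi(0)=w$, consecutive elements comparable under $\preceq$, $\pi(0)\preceq\pi(1)$ and $\pi(\ell)\preceq\pi(\ell-1)$. SLCS$_\eta$ formulas: $\Phi::=p\mid\neg\Phi\mid\Phi_1\wedge\Phi_2\mid\eta(\Phi_1,\Phi_2)$, $p\in\mathrm{PL}$. On polyhedral models: $x\models p$ iff $x\in V(p)$; negation, conjunction standard; $x\models\eta(\Phi_1,\Phi_2)$ iff some topological path $\pi$ from $x$ has $\pi(1)\models\Phi_2$ and $\pi(r)\models\Phi_1$ for all $r\in[0,1)$. On poset models $(W,\preceq,\mathcal{V})$: $w\models p$ iff $w\in\mathcal{V}(p)$; negation, conjunction standard; $w\models\eta(\Phi_1,\Phi_2)$ iff some $\pm$-path $\pi$ of length $\ell$ from $w$ has $\pi(\ell)\models\Phi_2$ and $\pi(i)\models\Phi_1$ for all $0\le i<\ell$. *)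

From HB Require Import structures.
From mathcomp Require Import all_boot all_order all_algebra.
From mathcomp Require Import finmap.
From mathcomp Require Import all_classical all_reals all_analysis.
Set Implicit Arguments. Unset Strict Implicit. Unset Printing Implicit Defensive.
Import Order.TTheory GRing.Theory Num.Theory.
Import numFieldNormedType.Exports.
Local Open Scope classical_set_scope.
Local Open Scope ring_scope.
Local Open Scope fset_scope.

Section Polyhedra.
Variables (R : realType) (m : nat).
Notation pt := 'rV[R]_m.

Definition hull (S : {fset pt}) : set pt :=
  [set x | exists l : pt -> R, (forall v, v \in S -> 0 <= l v) /\
     \sum_(v <- S) l v = 1 /\ x = \sum_(v <- S) l v *: v].

Definition relint (S : {fset pt}) : set pt :=
  [set x | exists l : pt -> R, (forall v, v \in S -> 0 < l v /\ l v <= 1) /\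
     \sum_(v <- S) l v = 1 /\ x = \sum_(v <- S) l v *: v].

Definition aff_indep (S : {fset pt}) : Prop :=
  forall l : pt -> R, \sum_(v <- S) l v = 0 -> \sum_(v <- S) l v *: v = 0 ->
    forall v, v \in S -> l v = 0.

Definition is_simplex (S : {fset pt}) : Prop := S != fset0 /\ aff_indep S.

Definition is_face (T S : {fset pt}) : Prop := T != fset0 /\ T `<=` S.

Definition simplicial_complex (K : {fset {fset pt}}) : Prop :=
  (forall S, S \in K -> is_simplex S) /\
  (forall S T, S \in K -> is_face T S -> T \in K) /\
  (forall S T, S \in K -> T \in K ->
     (hull S `&` hull T)%classic = set0 \/
     exists2 U, is_face U S /\ is_face U T & (hull S `&` hull T)%classic = hull U).

Definition polyhedron (K : {fset {fset pt}}) : set pt :=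
  (\bigcup_(S in [set S | S \in K]) hull S)%classic.

Definition poly_valuation (PL : Type) (K : {fset {fset pt}}) (V : PL -> set pt) :=
  forall p, exists C : set {fset pt}, (C `<=` [set S | S \in K])%classic /\
    V p = (\bigcup_(S in C) relint S)%classic.

End Polyhedra.
Local Close Scope fset_scope.

Inductive slcs (PL : Type) : Type :=
  | FAtom of PL
  | FNeg of slcs PL
  | FAnd of slcs PL & slcs PL
  | FEta of slcs PL & slcs PL.
Arguments FAtom {PL}. Arguments FNeg {PL}. Arguments FAnd {PL}. Arguments FEta {PL}.

Definition topo_path (R : realType) (m : nat) (P : set 'rV[R]_m) (x : 'rV[R]_m)
  (pi : R -> 'rV[R]_m) : Prop :=
  pi 0 = x /\ (forall r, r \in `[0, 1] -> P (pi r)) /\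
  {within `[(0:R), 1], continuous pi}.

Fixpoint sat_poly (R : realType) (m : nat) (PL : Type) (P : set 'rV[R]_m)
  (V : PL -> set 'rV[R]_m) (x : 'rV[R]_m) (f : slcs PL) : Prop :=
  match f with
  | FAtom p => V p x
  | FNeg g => ~ sat_poly P V x g
  | FAnd g h => sat_poly P V x g /\ sat_poly P V x h
  | FEta g h => exists pi, topo_path P x pi /\ sat_poly P V (pi 1) h /\
      (forall r, r \in `[0, 1[ -> sat_poly P V (pi r) g)
  end.

Definition pm_path (W : Type) (le : W -> W -> Prop) (w : W) (l : nat)
  (pi : nat -> W) : Prop :=
  (2 <= l)%N /\ pi 0%N = w /\
  (forall i, (i < l)%N -> le (pi i) (pi i.+1) \/ le (pi i.+1) (pi i)) /\
  le (pi 0%N) (pi 1%N) /\ le (pi l) (pi l.-1).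

Fixpoint sat_poset (W : Type) (le : W -> W -> Prop) (PL : Type)
  (val : PL -> W -> Prop) (w : W) (f : slcs PL) : Prop :=
  match f with
  | FAtom p => val p w
  | FNeg g => ~ sat_poset le val w g
  | FAnd g h => sat_poset le val w g /\ sat_poset le val w h
  | FEta g h => exists l pi, pm_path le w l pi /\ sat_poset le val (pi l) h /\
      (forall i, (i < l)%N -> sat_poset le val (pi i) g)
  end.

Section CellPoset.
Variables (R : realType) (m : nat) (K : {fset {fset 'rV[R]_m}}).

Definition cell : Type := {c : set 'rV[R]_m | exists2 S, S \in K & c = relint S}.

Definition cell_le (c1 c2 : cell) : Prop := proj1_sig c1 `<=` closure (proj1_sig c2).

Definition cell_val (PL : Type) (V : PL -> set 'rV[R]_m) (p : PL) (c : cell) : Prop :=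
  proj1_sig c `<=` V p.
End CellPoset.

From HB Require Import structures.
From mathcomp Require Import all_boot all_order all_algebra.
From mathcomp Require Import finmap.
From mathcomp Require Import all_classical all_reals all_analysis.
From mathcomp.algebra_tactics Require Import lra.
From mathcomp Require Import zify.
Set Implicit Arguments. Unset Strict Implicit. Unset Printing Implicit Defensive.
Import Order.TTheory GRing.Theory Num.Theory.
Import numFieldNormedType.Exports.
Local Open Scope classical_set_scope.
Local Open Scope ring_scope.

(* Truth of every formula is constant on cells, by induction on the formula.
   For eta, a ±-path of cells is realised by straight segments: a segment
   from a point of a cell to a point of a comparable cell stays inside these
   two cells, and the final downward step enters a face only at the end.
   Conversely, a topological eta-witness ending in the cell e lies, shortly
   before its end, in a cell d having e as a face; along the connected image
   of the path up to that time, the points whose cell is reachable from the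
   starting cell through adjacent cells satisfying the first formula form a
   relatively clopen set, hence everything.  This yields a ±-path, which
   finally steps down from d to e. *)

Section Barycentric.
Variables (R : realType) (m : nat).
Notation pt := 'rV[R]_m.

Definition zero_ext (T : {fset pt}) (l : pt -> R) (v : pt) : R :=
  if v \in T then l v else 0.

Lemma big_zero_ext (T S : {fset pt}) l : fsubset T S ->
  \sum_(v <- S) zero_ext T l v = \sum_(v <- T) l v.
Proof.
move=> TS; rewrite -(big_fset_incl _ TS); last by move=> x _ /negbTE; rewrite /zero_ext => ->.
by apply: eq_fbigr => x xT _; rewrite /zero_ext xT.
Qed.

Lemma big_zero_extZ (T S : {fset pt}) l : fsubset T S ->
  \sum_(v <- S) zero_ext T l v *: v = \sum_(v <- T) l v *: v.
Proof.
move=> TS; rewrite -(big_fset_incl _ TS); last first.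
  by move=> x _ /negbTE; rewrite /zero_ext => ->; rewrite scale0r.
by apply: eq_fbigr => x xT _; rewrite /zero_ext xT.
Qed.

Lemma fsum_ge_term (S : {fset pt}) (F : pt -> R) v :
  (forall w, w \in S -> 0 <= F w) -> v \in S -> F v <= \sum_(w <- S) F w.
Proof.
move=> F0 vS; rewrite (big_fsetD1 _ vS) /= lerDl.
rewrite big_seq; apply: sumr_ge0 => i; rewrite in_fsetD1 => /andP[_]; exact: F0.
Qed.

Lemma aff_indep_bary_eq (S : {fset pt}) l l' : aff_indep S ->
  \sum_(v <- S) l v = \sum_(v <- S) l' v ->
  \sum_(v <- S) l v *: v = \sum_(v <- S) l' v *: v ->
  forall v, v \in S -> l v = l' v.
Proof.
move=> ai e1 e2 v vS; apply/eqP; rewrite -subr_eq0; apply/eqP.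
apply: (ai (fun v => l v - l' v)) => //; first by rewrite sumrB e1 subrr.
by under eq_bigr do rewrite scalerBl; rewrite sumrB e2 subrr.
Qed.

Lemma relint_sub_hull (S : {fset pt}) : relint S `<=` hull S.
Proof.
move=> x [l [l01 [s1 ->]]]; exists l; split => // v vS.
by have [/ltW] := l01 v vS.
Qed.

(* The face is the support of the barycentric coordinates of the point. *)
Lemma hull_relint_face (S : {fset pt}) x : hull S x ->
  exists G : {fset pt}, [/\ G != fset0, fsubset G S & relint G x].
Proof.
move=> [l [l0 [s1 ->]]].
set G := [fset v in S | 0 < l v]%fset.
have GS : fsubset G S by apply/fsubsetP => v; rewrite !inE => /andP[].
have l_out v : v \in S -> v \notin G -> l v = 0.
  move=> vS; rewrite !inE vS /= => /negbTE lv.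
  by apply/eqP; rewrite eq_le l0 // andbT leNgt lv.
have sG : \sum_(v <- G) l v = 1.
  by rewrite (big_fset_incl _ GS) // => v vS vG; rewrite l_out.
exists G; split => //.
  by apply/eqP => G0; move: sG; rewrite G0 big_seq_fset0 => /eqP; rewrite eq_sym oner_eq0.
exists l; split; [|split=> //].
  move=> v vG; split; first by move: vG; rewrite !inE => /andP[].
  by rewrite -sG; apply: fsum_ge_term => // w /(fsubsetP GS) /l0.
by rewrite (big_fset_incl _ GS) // => v vS vG; rewrite l_out // scale0r.
Qed.

Lemma relint_hull_fsubset (S U : {fset pt}) x : aff_indep S -> fsubset U S ->
  relint S x -> hull U x -> fsubset S U.
Proof.
move=> ai US [l [l01 [s1 ->]]] [mu [mu0 [smu e]]].
apply/fsubsetP => v vS.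
have := aff_indep_bary_eq ai (l := l) (l' := zero_ext U mu) _ _ vS.
rewrite big_zero_ext // big_zero_extZ // s1 smu e => /(_ erefl erefl).
rewrite /zero_ext; case: ifP => // _ lv0; have [] := l01 v vS; by rewrite lv0 ltxx.
Qed.

Lemma relint_complex_inj (K : {fset {fset pt}}) S T x : simplicial_complex K ->
  S \in K -> T \in K -> relint S x -> relint T x -> S = T.
Proof.
move=> [simp [_ inter]] SK TK xS xT.
case: (inter S T SK TK) => [E|[U [[_ US] [_ UT]] E]].
  have : (hull S `&` hull T) x by split; exact: relint_sub_hull.
  by rewrite E.
have xU : hull U x by rewrite -E; split; exact: relint_sub_hull.
have SU := relint_hull_fsubset (simp S SK).2 US xS xU.
have TU := relint_hull_fsubset (simp T TK).2 UT xT xU.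
apply/eqP; rewrite eqEfsubset; apply/andP; split.
  exact: fsubset_trans SU UT.
exact: fsubset_trans TU US.
Qed.

Lemma relint_nonempty (S : {fset pt}) : S != fset0 -> exists x, relint S x.
Proof.
move=> S0; pose c : R := (#|` S|%:R)^-1.
have n0 : (0 < #|` S|)%N by rewrite cardfs_gt0.
have sc : \sum_(v <- S) c = 1.
  rewrite big_const_seq count_predT iter_addr_0 /c.
  by rewrite -(mulr_natr (_^-1)) mulVf // pnatr_eq0 -lt0n.
exists (\sum_(v <- S) c *: v), (fun=> c); split; last by split.
move=> v vS; have c0 : 0 < c by rewrite /c invr_gt0 ltr0n.
split=> //; rewrite -sc; apply: (@fsum_ge_term S (fun=> c) v) => // w _; exact: ltW.
Qed.

Lemma relint_convex_face (T S : {fset pt}) a b s : fsubset T S ->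
  relint T a -> relint S b -> 0 < s -> s <= 1 ->
  relint S ((1 - s) *: a + s *: b).
Proof.
move=> TS [la [la01 [sa ->]]] [lb [lb01 [sb ->]]] s0 s1.
pose l v := (1 - s) * zero_ext T la v + s * lb v.
have l0 v : v \in S -> 0 < l v.
  move=> vS; rewrite /l ltr_wpDl //; last by rewrite mulr_gt0 //; case: (lb01 v vS).
  apply: mulr_ge0; first by rewrite subr_ge0.
  by rewrite /zero_ext; case: ifP => // /la01 [/ltW].
have sl : \sum_(v <- S) l v = 1.
  by rewrite /l big_split /= -!mulr_sumr big_zero_ext // sa sb !mulr1 subrK.
exists l; split.
  move=> v vS; split; first exact: l0.
  by rewrite -sl; apply: fsum_ge_term => // w /l0 /ltW.
split => //; rewrite /l.
rewrite [RHS](eq_bigr (fun v => (1-s) *: (zero_ext T la v *: v) + s *: (lb v *: v))).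
  by rewrite big_split /= -!scaler_sumr big_zero_extZ.
by move=> i _; rewrite [LHS]scalerDl -!scalerA.
Qed.

Definition seg (p q : pt) (t : R) : pt := (1 - t) *: p + t *: q.

Lemma seg_continuous p q : continuous (seg p q).
Proof.
move=> t; apply: cvgD; apply: cvgZr_tmp; last exact: cvg_id.
by apply: cvgB; [exact: cvg_cst | exact: cvg_id].
Qed.

Lemma seg0 p q : seg p q 0 = p.
Proof. by rewrite /seg subr0 scale1r scale0r addr0. Qed.

Lemma seg1 p q : seg p q 1 = q.
Proof. by rewrite /seg subrr scale0r scale1r add0r. Qed.

Lemma relint_sub_closure_face (T S : {fset pt}) : S != fset0 -> fsubset T S ->
  relint T `<=` closure (relint S).
Proof.
move=> S0 TS y yT B nB.
have [b bS] := relint_nonempty S0.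
have /nbhs_ballP [e e0 eB] : (seg y b @ (0 : R)) B.
  by rewrite -{1}(seg0 y b) in nB; exact: seg_continuous nB.
pose s := Num.min (e / 2) 1.
have s0 : 0 < s by rewrite /s lt_min ltr01 andbT divr_gt0.
have s1 : s <= 1 by rewrite /s ge_min lexx orbT.
exists (seg y b s); split; first exact: (relint_convex_face TS yT bS s0 s1).
apply: (eB s); rewrite /ball /= sub0r normrN gtr0_norm //.
by rewrite /s gt_min ltr_pdivrMr // ltr_pMr // ltr1n orTb.
Qed.

Definition std_simplex n : set 'rV[R]_n :=
  [set w | (forall i, 0 <= w ord0 i) /\ \sum_(i < n) w ord0 i = 1].
Arguments std_simplex : clear implicits.

Lemma std_simplex_compact n : compact (std_simplex n).
Proof.
have sum_cont : continuous (fun w : 'rV[R]_n => \sum_(i < n) w ord0 i).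
  by apply: continuous_big; [exact: add_continuous | move=> i _; exact: coord_continuous].
have closed_simplex : closed (std_simplex n).
  have -> : std_simplex n = (\bigcap_(i in setT) [set w | 0 <= w ord0 i]) `&`
      ((fun w => \sum_(i < n) w ord0 i) @^-1` [set 1]).
    by apply/seteqP; split => w /= [w0 sw]; split => // i *; apply: w0.
  apply: closedI; last by apply: preimage_closed; [move=> w _; exact: sum_cont | exact: closed_eq].
  apply: closed_bigI => i _.
  apply: (@preimage_closed _ _ (fun w : 'rV[R]_n => w ord0 i) [set x : R | 0 <= x]).
    by move=> w _; exact: coord_continuous.
  exact: closed_ge.
apply: (subclosed_compact closed_simplex
  (@rV_compact R n (fun=> `[(0:R), 1]%classic) (fun=> @segment_compact R 0 1))).
move=> w [w0 sw] i /=; rewrite in_itv /= w0 /= -sw.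
by rewrite (bigD1 i) //= lerDl sumr_ge0.
Qed.

Lemma hull_std_simplex (S : {fset pt}) :
  hull S = (fun w => \sum_(i < size S) w ord0 i *: nth 0 S i) @` std_simplex (size S).
Proof.
apply/seteqP; split => x.
  move=> [l [l0 [sl ->]]]; exists (\row_i l (nth 0 S i)).
    split => [i|]; first by rewrite mxE; apply: l0; rewrite mem_nth.
    by rewrite -sl [RHS](big_nth 0) big_mkord; apply: eq_bigr => i _; rewrite mxE.
  by rewrite [RHS](big_nth 0) big_mkord; apply: eq_bigr => i _; rewrite mxE.
move=> [w [w0 sw] <-].
pose l v := \sum_(i < size S | nth 0 S i == v) w ord0 i.
have lE (j : 'I_(size S)) : l (nth 0 S j) = w ord0 j.
  by rewrite /l (big_pred1 j) // => i /=; rewrite nth_uniq ?fset_uniq.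
exists l; split; first by move=> v _; rewrite /l sumr_ge0.
split; first by rewrite (big_nth 0) big_mkord -sw; apply: eq_bigr => i _; rewrite lE.
by rewrite (big_nth 0) big_mkord; apply: eq_bigr => i _; rewrite lE.
Qed.

Lemma hull_closed (S : {fset pt}) : closed (hull S).
Proof.
rewrite hull_std_simplex; apply: compact_closed; first exact: norm_hausdorff.
apply: continuous_compact; last exact: std_simplex_compact.
apply: continuous_subspaceT; apply: continuous_big; first exact: add_continuous.
move=> i _ w; apply: (@cvgZr_tmp _ _ _ (nbhs w)); exact: coord_continuous.
Qed.

End Barycentric.

Section RealPaths.
Variables (R : realType) (T : topologicalType).

Definition glue (f g : R -> T) (r : R) : T :=
  if r <= 2^-1 then f (2 * r) else g (2 * r - 1).

Lemma glue_continuous (f g : R -> T) : continuous f -> continuous g -> f 1 = g 0 ->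
  continuous (glue f g).
Proof.
move=> fc gc fg.
have fc2 : continuous (fun r : R => f (2 * r)).
  move=> r; apply: continuous_comp; last exact: fc.
  by apply: cvgM; [exact: cvg_cst | exact: cvg_id].
have gc2 : continuous (fun r : R => g (2 * r - 1)).
  move=> r; apply: continuous_comp; last exact: gc.
  by apply: cvgB; [apply: cvgM; [exact: cvg_cst | exact: cvg_id] | exact: cvg_cst].
have left_half : {within [set r : R | r <= 2^-1], continuous (glue f g)}.
  apply: (@subspace_eq_continuous _ _ _ (fun r : R => f (2 * r))).
    by move=> r; rewrite inE /glue /from_subspace /= => hr; rewrite ifT.
  exact: continuous_subspaceT.
have right_half : {within [set r : R | 2^-1 <= r], continuous (glue f g)}.
  apply: (@subspace_eq_continuous _ _ _ (fun r : R => g (2 * r - 1))).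
    move=> r; rewrite inE /glue /from_subspace /= => hr; case: ifP => // hr'.
    have -> : r = 2^-1 by apply/eqP; rewrite eq_le hr hr'.
    by rewrite mulfV ?pnatr_eq0 // subrr.
  exact: continuous_subspaceT.
have cl_left : closed [set r : R | r <= 2^-1] by exact: closed_le.
have cl_right : closed [set r : R | 2^-1 <= r] by exact: closed_ge.
have := withinU_continuous cl_left cl_right left_half right_half.
have -> : [set r : R | r <= 2^-1] `|` [set r | 2^-1 <= r] = setT.
  by apply/seteqP; split => // r _ /=; case: (lerP r 2^-1) => h; [left | right; exact: ltW].
rewrite continuous_open_subspace; last exact: openT.
by move=> h r; apply: h; rewrite inE.
Qed.

Lemma closed_avoid_end (ga : R -> T) (E : set T) :
  {within `[0, 1], continuous ga} -> closed E -> ~ E (ga 1) ->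
  exists r, [/\ 0 <= r, r < 1 & ~ E (ga r)].
Proof.
move=> gc cE nE.
have i1 : (1 : R) \in `[0, 1] by rewrite in_itv /= ler01 lexx.
move: ((subspace_continuousP _ _).1 gc 1 i1 (~` E)).
move=> /(_ (open_nbhs_nbhs (conj (closed_openC cE) nE))).
rewrite /within /= => /nbhs_ballP [e e0 eB].
pose s := Num.min (e / 2) 2^-1.
have s0 : 0 < s by rewrite lt_min divr_gt0 // invr_gt0 ltr0n.
have s1 : s <= 2^-1 by rewrite ge_min lexx orbT.
have se : s < e by rewrite gt_min ltr_pdivrMr // ltr_pMr // ltr1n orTb.
exists (1 - s); split; [lra | lra |].
apply: (eB (1 - s)); first by rewrite /ball /= opprB addrC subrK ger0_norm // ltW.
by rewrite in_itv /=; apply/andP; split; lra.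
Qed.

End RealPaths.

Section Complex.
Variables (R : realType) (m : nat) (K : {fset {fset 'rV[R]_m}}).
Hypothesis HK : simplicial_complex K.
Local Notation pt := 'rV[R]_m.
Local Notation P := (polyhedron K).

Lemma complex_simplex S : S \in K -> is_simplex S.
Proof. by case: HK => h _; apply: h. Qed.

Lemma complex_face S T : S \in K -> T != fset0 -> fsubset T S -> T \in K.
Proof. by case: HK => _ [h _] SK T0 TS; apply: (h S T SK); split. Qed.

Lemma hull_face_cell S z : S \in K -> hull S z ->
  exists2 G, G \in K & fsubset G S /\ relint G z.
Proof.
move=> SK /hull_relint_face [G [G0 GS Gz]]; exists G => //.
exact: complex_face SK G0 GS.
Qed.

Lemma polyhedron_cell z : P z -> exists2 S, S \in K & relint S z.
Proof. by move=> [S /= SK /(hull_face_cell SK) [G GK [_ Gz]]]; exists G. Qed.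

Lemma relint_polyhedron S z : S \in K -> relint S z -> P z.
Proof. by move=> SK zS; exists S => //; exact: relint_sub_hull. Qed.

Lemma relint_hull_face S T z : S \in K -> T \in K -> relint T z -> hull S z ->
  fsubset T S.
Proof.
move=> SK TK zT /(hull_face_cell SK) [G GK [GS Gz]].
by rewrite (relint_complex_inj HK TK GK zT Gz).
Qed.

Lemma closure_relint_fsubset S T : S \in K -> T \in K ->
  relint T `<=` closure (relint S) -> fsubset T S.
Proof.
move=> SK TK TS; have [y yT] := relint_nonempty (complex_simplex TK).1.
apply: (relint_hull_face SK TK yT).
by apply: hull_closed; exact: (closureS (@relint_sub_hull _ _ S) (TS y yT)).
Qed.

Lemma fsubset_relint_closure S T : S \in K -> fsubset T S ->
  relint T `<=` closure (relint S).
Proof. by move=> SK; apply: relint_sub_closure_face; exact: (complex_simplex SK).1. Qed.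

Lemma closed_bigcup_hull (Q : {fset pt} -> Prop) :
  closed (\bigcup_(S in [set S | S \in K /\ Q S]) hull S).
Proof.
apply: closed_bigcup; last by move=> S _; exact: hull_closed.
by apply: sub_finite_set (finite_fset K) => S [].
Qed.

Definition cell_of S (SK : S \in K) : cell K :=
  exist _ (relint S) (ex_intro2 _ _ S SK erefl).

Lemma cell_polyhedron (d : cell K) y : proj1_sig d y -> P y.
Proof. by have [S SK ->] := proj2_sig d; exact: relint_polyhedron. Qed.

Lemma cell_unique (d e : cell K) y : proj1_sig d y -> proj1_sig e y ->
  proj1_sig d = proj1_sig e.
Proof.
have [S SK ->] := proj2_sig d; have [T TK ->] := proj2_sig e => Sy Ty.
by rewrite (relint_complex_inj HK SK TK Sy Ty).
Qed.

Lemma cell_nonempty (d : cell K) : exists y, proj1_sig d y.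
Proof.
by have [S SK ->] := proj2_sig d; exact/relint_nonempty/(complex_simplex SK).1.
Qed.

Lemma valuation_cell_sub (PL : Type) (V : PL -> set pt) p (d : cell K) y :
  poly_valuation K V -> proj1_sig d y -> V p y -> proj1_sig d `<=` V p.
Proof.
move=> /(_ p) [C [CK ->]] dy [S CS Sy].
have := cell_unique (d := cell_of (CK S CS)) Sy dy; rewrite /= => <- z Sz.
by exists S.
Qed.

Lemma cell_le_refl (d : cell K) : cell_le d d.
Proof. by move=> y; exact: subset_closure. Qed.

Lemma cell_le_seg_lt1 (d e : cell K) p q r : cell_le e d ->
  proj1_sig d p -> proj1_sig e q -> 0 <= r -> r < 1 -> proj1_sig d (seg p q r).
Proof.
rewrite /cell_le; have [S SK ->] := proj2_sig d; have [T TK ->] := proj2_sig e.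
move=> /(closure_relint_fsubset SK TK) TS pS qT r0 r1.
have := relint_convex_face TS qT pS (s := 1 - r).
by rewrite subr_gt0 r1 gerBl r0 subKr /seg addrC => /(_ isT isT).
Qed.

Lemma cell_le_seg_gt0 (d e : cell K) p q r : cell_le e d ->
  proj1_sig e p -> proj1_sig d q -> 0 < r -> r <= 1 -> proj1_sig d (seg p q r).
Proof.
rewrite /cell_le; have [S SK ->] := proj2_sig d; have [T TK ->] := proj2_sig e.
by move=> /(closure_relint_fsubset SK TK); exact: relint_convex_face.
Qed.

Lemma seg_comparable_cells (d e : cell K) p q r : cell_le d e \/ cell_le e d ->
  proj1_sig d p -> proj1_sig e q -> r \in `[0, 1] ->
  proj1_sig d (seg p q r) \/ proj1_sig e (seg p q r).
Proof.
move=> cmp dp eq; rewrite in_itv /= => /andP[r0 r1].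
have [->|rn0] := eqVneq r 0; first by left; rewrite seg0.
have rp : 0 < r by rewrite lt_neqAle eq_sym rn0 r0.
case: cmp => le; first by right; exact: cell_le_seg_gt0 le dp eq rp r1.
have [->|rn1] := eqVneq r 1; first by right; rewrite seg1.
by left; apply: cell_le_seg_lt1 le dp eq r0 _; rewrite lt_neqAle rn1 r1.
Qed.

Lemma closure_cell_le (A : set pt) y : A `<=` P -> closure A y ->
  exists (d e : cell K) a, [/\ A a, proj1_sig d a, proj1_sig e y & cell_le e d].
Proof.
move=> AP cl; pose Q S := exists2 a, A a & relint S a.
have sub : A `<=` \bigcup_(S in [set S | S \in K /\ Q S]) hull S.
  move=> a Aa; have [S SK Sa] := polyhedron_cell (AP a Aa).
  by exists S; [split => //; exists a | exact: relint_sub_hull].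
have [S [SK [a Aa Sa]] yS] := closed_bigcup_hull (closureS sub cl).
have [G GK [GS Gy]] := hull_face_cell SK yS.
exists (cell_of SK), (cell_of GK), a; split => //.
exact: fsubset_relint_closure.
Qed.

(* Near its end a path stays in the open star of the cell of its endpoint. *)
Lemma path_end_cell (ga : R -> pt) : {within `[0, 1], continuous ga} ->
  (forall r, r \in `[0, 1] -> P (ga r)) ->
  exists r0 (d e : cell K),
    [/\ 0 <= r0, r0 < 1, proj1_sig d (ga r0), proj1_sig e (ga 1) & cell_le e d].
Proof.
move=> gc gP.
have [Send SendK endS] : exists2 S, S \in K & relint S (ga 1).
  by apply/polyhedron_cell/gP; rewrite in_itv /= ler01 lexx.
pose E := \bigcup_(S in [set S | S \in K /\ ~ fsubset Send S]) hull S.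
have [r0 [r00 r01 nE]] : exists r, [/\ 0 <= r, r < 1 & ~ E (ga r)].
  apply: (closed_avoid_end gc); first exact: closed_bigcup_hull.
  by move=> [S [SK nsub] endS']; apply: nsub; exact: relint_hull_face SK SendK endS endS'.
have [D DK r0D] : exists2 D, D \in K & relint D (ga r0).
  by apply/polyhedron_cell/gP; rewrite in_itv /= r00 ltW.
have SendD : fsubset Send D.
  by apply: contrapT => nsub; apply: nE; exists D => //; exact: relint_sub_hull.
exists r0, (cell_of DK), (cell_of SendK); split => //.
exact: fsubset_relint_closure.
Qed.

End Complex.

Section Reach.
Variables (R : realType) (m : nat) (K : {fset {fset 'rV[R]_m}}).
Hypothesis HK : simplicial_complex K.
Variables (good : cell K -> Prop) (c : cell K).

Definition reach (d : cell K) :=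
  exists l (pth : nat -> cell K), [/\ pth 0%N = c, pth l = d,
    (forall i, (i <= l)%N -> good (pth i)) &
    (forall i, (i < l)%N -> cell_le (pth i) (pth i.+1) \/ cell_le (pth i.+1) (pth i))].

Lemma reach_refl : good c -> reach c.
Proof. by move=> gc; exists 0%N, (fun=> c); split => // i; rewrite leqn0 => /eqP ->. Qed.

Lemma reach_ext d d' : reach d -> good d' -> cell_le d d' \/ cell_le d' d -> reach d'.
Proof.
move=> [l [pth [p0 pl pg adj]]] gd' dd'.
exists l.+1, (fun i => if (i <= l)%N then pth i else d'); split.
- by rewrite leq0n.
- by rewrite ltnn.
- by move=> i il; case: ifP => // /pg.
- move=> i il; case: ifP => hi; case: ifP => hi1; try lia; first exact: adj.
  have -> : i = l by lia.
  by rewrite pl.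
Qed.

(* Prepending [c] makes the first step go upwards, as a ±-path must. *)
Lemma reach_pm_path d e : reach d -> cell_le e d ->
  exists l pth, [/\ pm_path (@cell_le R m K) c l pth, pth l = e &
    forall i, (i < l)%N -> good (pth i)].
Proof.
move=> [l [pth [p0 pl pg adj]]] ed.
exists l.+2, (fun i => if i == 0%N then c else if (i <= l.+1)%N then pth i.-1 else e).
split; [split; [done | split; [done | split; [| split]]] | by rewrite /= ltnn |].
- move=> i il; case: eqP => [-> /=|i0]; first by left; rewrite -p0; exact: cell_le_refl.
  case: ifP => hi; case: ifP => hi1; try lia.
    have -> : i = i.-1.+1 by lia.
    by apply: adj; lia.
  have -> : i = l.+1 by lia.
  by rewrite /= pl; right.
- by rewrite /= -p0; exact: cell_le_refl.
- by rewrite ltnn /= leqnn pl.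
- move=> i il; case: eqP => [_|i0]; first by rewrite -p0; apply: pg.
  by rewrite ifT; [apply: pg | ]; lia.
Qed.

Definition reached : set 'rV[R]_m := [set y | exists2 d, reach d & proj1_sig d y].

Variable Z : set 'rV[R]_m.
Hypothesis ZP : Z `<=` polyhedron K.
Hypothesis Zgood : forall y (d : cell K), Z y -> proj1_sig d y -> good d.

Lemma closure_reached y : Z y -> closure (Z `&` reached) y -> reached y.
Proof.
move=> Zy /(closure_cell_le HK (subset_trans (@subIsetl _ _ _) ZP)).
move=> [d [e [a [[_ [d' rd' d'a]] da ey ed]]]].
exists e => //; apply: (reach_ext rd' (Zgood Zy ey)); right.
by rewrite /cell_le (cell_unique HK d'a da).
Qed.

Lemma reached_not_closure y : reached y -> ~ closure (Z `&` ~` reached) y.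
Proof.
move=> [d' rd' d'y] /(closure_cell_le HK (subset_trans (@subIsetl _ _ _) ZP)).
move=> [d [e [a [[Za nUa] da ey ed]]]].
apply: nUa; exists d => //; apply: (reach_ext rd' (Zgood Za da)); left.
by rewrite /cell_le (cell_unique HK d'y ey).
Qed.

Lemma connected_reached x : connected Z -> Z x -> proj1_sig c x -> Z `<=` reached.
Proof.
move=> Zc Zx cx y Zy; apply: contrapT => nUy.
apply: ((connectedPn Z).2 _ Zc).
exists (fun b => if b then Z `&` ~` reached else Z `&` reached); split.
- case; first by exists y.
  by exists x; split => //; exists c => //; apply/reach_refl/(Zgood Zx cx).
- apply/seteqP; split => [z Zz|z [] [] //].
  by case: (pselect (reached z)); [left | right].
- split; apply/seteqP; split => // z /=.
    by move=> [cl [Zz]]; apply; exact: closure_reached.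
  by move=> [[_ Uz]]; exact: reached_not_closure.
Qed.

End Reach.

Section Semantics.
Variables (R : realType) (m : nat) (K : {fset {fset 'rV[R]_m}}).
Hypothesis HK : simplicial_complex K.
Variables (PL : Type) (V : PL -> set 'rV[R]_m).
Local Notation pt := 'rV[R]_m.
Local Notation P := (polyhedron K).
Local Notation spoly := (sat_poly P V).
Local Notation sposet := (sat_poset (@cell_le R m K) (cell_val V)).

Section Eta.
Variables (g h : slcs PL).
Hypothesis IHg : forall x (c : cell K), proj1_sig c x -> (spoly x g <-> sposet c g).
Hypothesis IHh : forall x (c : cell K), proj1_sig c x -> (spoly x h <-> sposet c h).

Definition eta_witness (p : pt) := exists pi : R -> pt, [/\ continuous pi, pi 0 = p,
  (forall r, r \in `[0, 1] -> P (pi r)), spoly (pi 1) h &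
  (forall r, r \in `[0, 1[ -> spoly (pi r) g)].

Lemma eta_witness_sat p : eta_witness p -> spoly p (FEta g h).
Proof.
move=> [pi [pc p0 pP p1 pg]]; exists pi; split => //; split => //; split => //.
exact: continuous_subspaceT.
Qed.

Lemma eta_witness_glue (gam : R -> pt) p : continuous gam -> gam 0 = p ->
  (forall r, r \in `[0, 1] -> P (gam r) /\ spoly (gam r) g) ->
  eta_witness (gam 1) -> eta_witness p.
Proof.
move=> sc s0 sP [rho [rc r0 rP r1 rg]].
have first_half (r : R) : r <= 2^-1 -> 0 <= r -> 2 * r \in `[0, 1].
  by move=> *; rewrite in_itv /=; apply/andP; split; lra.
have second_half (r : R) : ~~ (r <= 2^-1) -> r <= 1 -> 2 * r - 1 \in `[0, 1].
  by rewrite -ltNge => *; rewrite in_itv /=; apply/andP; split; lra.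
exists (glue gam rho); split.
- exact: glue_continuous.
- by rewrite /glue ifT ?mulr0 // invr_ge0 ler0n.
- move=> r; rewrite in_itv /= => /andP[r0' r1']; rewrite /glue; case: ifP => hr.
    by case: (sP (2 * r)); [exact: first_half|].
  by apply: rP; apply: second_half; rewrite ?hr.
- rewrite /glue ifF; first by rewrite mulr1 (_ : 2 - 1 = 1) //; lra.
  by apply/negbTE; rewrite -ltNge; lra.
- move=> r; rewrite in_itv /= => /andP[r0' r1']; rewrite /glue; case: ifP => hr.
    by case: (sP (2 * r)); [exact: first_half|].
  apply: rg; have := second_half r; rewrite hr !in_itv /= => /(_ isT (ltW r1')).
  by move=> /andP[-> _]; lra.
Qed.

Lemma eta_witness_seg p q : (forall r, r \in `[0, 1] -> P (seg p q r)) ->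
  (forall r, r \in `[0, 1[ -> spoly (seg p q r) g) -> spoly q h -> eta_witness p.
Proof.
move=> sP sg sh; exists (seg p q); split => //.
- exact: seg_continuous.
- exact: seg0.
- by rewrite seg1.
Qed.

Lemma sat_cell_point (d : cell K) y : sposet d g -> proj1_sig d y -> spoly y g.
Proof. by move=> dg dy; apply/(IHg dy). Qed.

Lemma eta_witness_last (d e : cell K) p : cell_le e d -> sposet d g -> sposet e h ->
  proj1_sig d p -> eta_witness p.
Proof.
move=> ed dg eh dp; have [q eq_q] := cell_nonempty HK e.
apply: (eta_witness_seg (q := q)).
- move=> r; rewrite in_itv /= => /andP[r0 r1]; have [->|r1'] := eqVneq r 1.
    by rewrite seg1; exact: cell_polyhedron eq_q.
  apply: (cell_polyhedron (d := d)); apply: (cell_le_seg_lt1 HK ed dp eq_q r0).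
  by rewrite lt_neqAle r1' r1.
- move=> r; rewrite in_itv /= => /andP[r0 r1]; apply: (sat_cell_point dg).
  exact: (cell_le_seg_lt1 HK ed dp eq_q r0 r1).
- exact/(IHh eq_q).
Qed.

Lemma eta_witness_step (d d' : cell K) p : cell_le d d' \/ cell_le d' d ->
  sposet d g -> sposet d' g -> proj1_sig d p ->
  (forall q, proj1_sig d' q -> eta_witness q) -> eta_witness p.
Proof.
move=> dd' dg d'g dp IH; have [q d'q] := cell_nonempty HK d'.
apply: (eta_witness_glue (@seg_continuous _ _ p q) (seg0 p q)); last by rewrite seg1; exact: IH.
move=> r /(seg_comparable_cells HK dd' dp d'q) [] s.
  by split; [exact: cell_polyhedron s | exact: sat_cell_point dg s].
by split; [exact: cell_polyhedron s | exact: sat_cell_point d'g s].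
Qed.

Lemma eta_poset_poly (c : cell K) x : proj1_sig c x ->
  sposet c (FEta g h) -> spoly x (FEta g h).
Proof.
move=> cx [l [pth [[l2 [p0 [adj [_ lst]]]] [hl gl]]]].
suff walk n j p : (j + n.+1 = l)%N -> proj1_sig (pth j) p -> eta_witness p.
  by apply: eta_witness_sat; apply: (walk l.-1 0%N x); [lia | rewrite p0].
elim: n j p => [|n IHn] j p jl pj.
  have jl' : j = l.-1 by lia.
  subst j; apply: (eta_witness_last lst _ hl pj); apply: gl; lia.
apply: (eta_witness_step (adj j _) (gl j _) (gl j.+1 _) pj); try lia.
by move=> q; apply: IHn; lia.
Qed.

Lemma eta_poly_poset (c : cell K) x : proj1_sig c x ->
  spoly x (FEta g h) -> sposet c (FEta g h).
Proof.
move=> cx [ga [[g0 [gP gc]] [g1 gg]]].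
have [r0 [d [e [r00 r01 dr0 e1 ed]]]] := path_end_cell HK gc gP.
pose Z := ga @` `[0, r0].
have ZP : Z `<=` P.
  by move=> y [r]; rewrite /= in_itv /= => /andP[a b] <-; apply: gP; rewrite in_itv /= a; lra.
have Zg y (d' : cell K) : Z y -> proj1_sig d' y -> sposet d' g.
  move=> [r]; rewrite /= in_itv /= => /andP[a b] <- d'y.
  by apply/(IHg d'y)/gg; rewrite in_itv /= a; lra.
have Zc : connected Z.
  apply: connected_continuous_connected.
    by apply/connected_intervalP; exact: interval_is_interval.
  apply: continuous_subspaceW gc => r; rewrite /= !in_itv /= => /andP[a b].
  by rewrite a /=; lra.
have Zx : Z x by exists 0; rewrite //= in_itv /= lexx r00.
have Zr0 : Z (ga r0) by exists r0; rewrite //= in_itv /= lexx r00.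
have [d' rd' d'r0] := connected_reached HK ZP Zg Zc Zx cx Zr0.
have ed' : cell_le e d' by rewrite /cell_le (cell_unique HK d'r0 dr0).
have [l [pth [pmp pl pg]]] := reach_pm_path rd' ed'.
by exists l, pth; split => //; split => //; rewrite pl; exact/(IHh e1).
Qed.

End Eta.

Hypothesis HV : poly_valuation K V.

Lemma sat_poly_poset f x (c : cell K) : proj1_sig c x -> (spoly x f <-> sposet c f).
Proof.
elim: f x c => [p|f IH|f1 IH1 f2 IH2|f1 IH1 f2 IH2] x c cx /=.
- by split => [Vx|]; [exact: valuation_cell_sub HV cx Vx | apply].
- by rewrite (IH x c cx).
- by rewrite (IH1 x c cx) (IH2 x c cx).
- by split; [exact: eta_poly_poset | exact: eta_poset_poly].
Qed.

End Semantics.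

Theorem theorem1 (R : realType) (m : nat) (PL : Type)
  (K : {fset {fset 'rV[R]_m}}) (V : PL -> set 'rV[R]_m) :
  simplicial_complex K -> poly_valuation K V ->
  forall (x : 'rV[R]_m), polyhedron K x ->
  forall (c : cell K), proj1_sig c x ->
  forall (f : slcs PL),
    sat_poly (polyhedron K) V x f <-> sat_poset (@cell_le R m K) (cell_val V) c f.
Proof. by move=> HK HV x _ c cx f; exact: sat_poly_poset. Qed.
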